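(* For any monoid $M$, $\mathfrak{L}(\mathrm{Val},\mathrm{PDA},M)=\mathfrak{L}(\mathrm{Val},\mathrm{NFA},\mathrm{P}_2\times M)$.
   Context: A pushdown automaton is $(Q,\Sigma,\Gamma,\delta,q_0,Q_a)$ with finite states $Q$, input alphabet $\Sigma$, stack alphabet $\Gamma$, initial state $q_0$, accept states $Q_a$, and $\delta: Q\times\Sigma_\varepsilon\times\Gamma_\varepsilon\to\mathbb{P}(Q\times\Gamma_\varepsilon)$ (with $X_\varepsilon=X\cup\{\varepsilon\}$; a transition reads an input letter or nothing, pops a symbol or nothing, pushes a symbol or nothing). A valence PDA over $M$ assigns to each transition an element of $M$ (its valence); the valence of a computation is the product of the valences of its transitions in order, and a word is accepted if there is an accepting computation for it whose valence is the identity of $M$ (accepting computations being those of the underlying PDA, ending in an accept state with empty stack). $\mathfrak{L}(\mathrm{Val},\mathrm{PDA},M)$ is the family of languages so accepted. A valence automaton over a monoid $N$ is a nondeterministic finite automaton with $\varepsilon$-moves in which each transition carries a valence in $N$, accepting a word if some computation reading it from the initial state to an accept state has valence product equal to the identity; $\mathfrak{L}(\mathrm{Val},\mathrm{NFA},N)$ is the family of such languages. For a finite alphabet $X$, the polycyclic monoid $P(X)$ is the monoid of partial functions on $X^*$ generated by $P_x:u\mapsto ux$ and $Q_x: ux\mapsto u$ (defined only on $X^*x$), $x\in X$; $\mathrm{P}_2$ is the polycyclic monoid on a two-letter alphabet. *)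

From Stdlib Require Import FunctionalExtensionality ProofIrrelevance.
From mathcomp Require Import all_boot.

Set Implicit Arguments.
Unset Strict Implicit.
Unset Printing Implicit Defensive.

Record monoid := Monoid {
  mcar :> Type;
  mmul : mcar -> mcar -> mcar;
  mone : mcar;
  mmulA : forall x y z, mmul x (mmul y z) = mmul (mmul x y) z;
  mul1m : forall x, mmul mone x = x;
  mulm1 : forall x, mmul x mone = x }.

Section Prod.
Variables M N : monoid.
Definition prod_mul (x y : M * N) : M * N := (mmul x.1 y.1, mmul x.2 y.2).
Lemma prod_mulA x y z : prod_mul x (prod_mul y z) = prod_mul (prod_mul x y) z.
Proof. by rewrite /prod_mul /= !mmulA. Qed.
Lemma prod_mul1m x : prod_mul (mone M, mone N) x = x.
Proof. by case: x => a b; rewrite /prod_mul /= !mul1m. Qed.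
Lemma prod_mulm1 x : prod_mul x (mone M, mone N) = x.
Proof. by case: x => a b; rewrite /prod_mul /= !mulm1. Qed.
Definition prod_monoid : monoid :=
  @Monoid (M * N)%type prod_mul (mone M, mone N) prod_mulA prod_mul1m prod_mulm1.
End Prod.

(* The polycyclic monoid P(X): the monoid of partial functions on X^*  *)
(* generated by P_x : u |-> ux and Q_x : ux |-> u.  Partial functions  *)
(* act on the right: the product f g means "first f, then g".          *)
Section Polycyclic.
Variable X : eqType.

Definition pfun := seq X -> option (seq X).

Definition Pgen (x : X) : pfun := fun u => Some (rcons u x).
Definition Qgen (x : X) : pfun := fun u =>
  if (0 < size u) && (last x u == x) then Some (take (size u).-1 u) else None.

Definition pid : pfun := fun u => Some u.
Definition pcomp (f g : pfun) : pfun := fun u => obind g (f u).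

Inductive in_polycyclic : pfun -> Prop :=
| pc_id : in_polycyclic pid
| pc_P x f : in_polycyclic f -> in_polycyclic (pcomp f (Pgen x))
| pc_Q x f : in_polycyclic f -> in_polycyclic (pcomp f (Qgen x)).

Lemma pcompA f g h : pcomp f (pcomp g h) = pcomp (pcomp f g) h.
Proof. by apply: functional_extensionality => u; rewrite /pcomp; case: (f u). Qed.
Lemma pcomp1f f : pcomp pid f = f.
Proof. by apply: functional_extensionality. Qed.
Lemma pcompf1 f : pcomp f pid = f.
Proof. by apply: functional_extensionality => u; rewrite /pcomp; case: (f u). Qed.

Lemma in_polycyclic_comp f g :
  in_polycyclic f -> in_polycyclic g -> in_polycyclic (pcomp f g).
Proof.
move=> Hf; elim=> [|x g' _ IH|x g' _ IH]; first by rewrite pcompf1.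
- by rewrite pcompA; apply: pc_P.
- by rewrite pcompA; apply: pc_Q.
Qed.

Definition polycyc := {f : pfun | in_polycyclic f}.

Lemma polycyc_eq (a b : polycyc) : proj1_sig a = proj1_sig b -> a = b.
Proof.
case: a => f Hf; case: b => g Hg /= E; subst g.
by rewrite (proof_irrelevance _ Hf Hg).
Qed.

Definition pc_mul (a b : polycyc) : polycyc :=
  exist _ (pcomp (proj1_sig a) (proj1_sig b))
    (in_polycyclic_comp (proj2_sig a) (proj2_sig b)).
Definition pc_one : polycyc := exist _ pid pc_id.

Lemma pc_mulA a b c : pc_mul a (pc_mul b c) = pc_mul (pc_mul a b) c.
Proof. by apply: polycyc_eq; rewrite /= pcompA. Qed.
Lemma pc_mul1m a : pc_mul pc_one a = a.
Proof. by apply: polycyc_eq; rewrite /= pcomp1f. Qed.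
Lemma pc_mulm1 a : pc_mul a pc_one = a.
Proof. by apply: polycyc_eq; rewrite /= pcompf1. Qed.

Definition polycyclic_monoid : monoid :=
  @Monoid polycyc pc_mul pc_one pc_mulA pc_mul1m pc_mulm1.
End Polycyclic.

Definition P2 : monoid := @polycyclic_monoid bool.

Definition oseq (T : Type) (o : option T) : seq T :=
  if o is Some x then [:: x] else [::].

(* Valence PDA over M with input alphabet S.
   delta q a g : the set of (q', g') ; a = None / g = None / g' = None
   stand for epsilon (no input read / no pop / no push). *)
Record vpda (S : finType) (M : monoid) := VPDA {
  pda_state : finType;
  pda_stack : finType;
  pda_delta : pda_state -> option S -> option pda_stack ->
              {set (pda_state * option pda_stack)};
  pda_init : pda_state;
  pda_accept : {set pda_state};
  pda_val : pda_state -> option S -> option pda_stack ->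
            pda_state -> option pda_stack -> M }.

(* @pda_run S M A q st w m q' st' : from configuration (q, st) (stack top = head)
   the PDA can read w and reach (q', st') by a computation of valence m. *)
Inductive pda_run (S : finType) (M : monoid) (A : vpda S M) :
  pda_state A -> seq (pda_stack A) -> seq S -> M ->
  pda_state A -> seq (pda_stack A) -> Prop :=
| prun_nil q st : @pda_run S M A q st [::] (mone M) q st
| prun_step q a g q1 g1 st w m q2 st2 :
    (q1, g1) \in @pda_delta S M A q a g ->
    @pda_run S M A q1 (oseq g1 ++ st) w m q2 st2 ->
    @pda_run S M A q (oseq g ++ st) (oseq a ++ w) (mmul (@pda_val S M A q a g q1 g1) m) q2 st2.

Definition pda_accepts (S : finType) (M : monoid) (A : vpda S M) (w : seq S) :=
  exists2 qf, qf \in pda_accept A & @pda_run S M A (pda_init A) [::] w (mone M) qf [::].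

Record vnfa (S : finType) (N : monoid) := VNFA {
  nfa_state : finType;
  nfa_delta : nfa_state -> option S -> {set nfa_state};
  nfa_init : nfa_state;
  nfa_accept : {set nfa_state};
  nfa_val : nfa_state -> option S -> nfa_state -> N }.

Inductive nfa_run (S : finType) (N : monoid) (A : vnfa S N) :
  nfa_state A -> seq S -> N -> nfa_state A -> Prop :=
| nrun_nil q : @nfa_run S N A q [::] (mone N) q
| nrun_step q a q1 w m q2 :
    q1 \in @nfa_delta S N A q a ->
    @nfa_run S N A q1 w m q2 ->
    @nfa_run S N A q (oseq a ++ w) (mmul (@nfa_val S N A q a q1) m) q2.

Definition nfa_accepts (S : finType) (N : monoid) (A : vnfa S N) (w : seq S) :=
  exists2 qf, qf \in nfa_accept A & @nfa_run S N A (nfa_init A) w (mone N) qf.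

Definition L_Val_PDA (M : monoid) (S : finType) (L : seq S -> Prop) : Prop :=
  exists A : vpda S M, forall w, L w <-> pda_accepts A w.

Definition L_Val_NFA (N : monoid) (S : finType) (L : seq S -> Prop) : Prop :=
  exists A : vnfa S N, forall w, L w <-> nfa_accepts A w.

From Pilot Require Import Defs.
From mathcomp Require Import all_boot.
From Stdlib Require Import FunctionalExtensionality ClassicalEpsilon.

Set Implicit Arguments.
Unset Strict Implicit.
Unset Printing Implicit Defensive.

(* Every element of P(X) is a word in the generators P_x, Q_x, and it commutes
   with left concatenation, so it is the identity as soon as it fixes the empty
   word.  A PDA over M is simulated by a valence automaton over P_2 x M keeping
   the stack in the P_2 component: each stack symbol is a one-hot binary code of
   fixed length, pushing it is a product of P_x and popping it a product of Q_x,
   and the P_2 valence of a run from and to the empty stack is the identity.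
   Conversely, a PDA over M executes the generator word of each P_2 valence
   letter by letter on a binary stack, through intermediate states, pushing x
   for P_x and popping x for Q_x. *)

Section PolycyclicWords.
Variable X : eqType.

Definition pc_gen (b : bool * X) : pfun X := if b.1 then Pgen b.2 else Qgen b.2.

Definition pc_word (l : seq (bool * X)) : pfun X :=
  foldr (fun b f => Defs.pcomp (pc_gen b) f) (@pid X) l.

Lemma pc_word_cons b l u : pc_word (b :: l) u = obind (pc_word l) (pc_gen b u).
Proof. by []. Qed.

Lemma pc_word_cat l1 l2 u :
  pc_word (l1 ++ l2) u = obind (pc_word l2) (pc_word l1 u).
Proof. by elim: l1 u => [|b l IH] u //=; rewrite /Defs.pcomp; case: (pc_gen b u). Qed.

Lemma in_polycyclic_gen b : in_polycyclic (pc_gen b).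
Proof.
case: b => [[] x]; rewrite /pc_gen /= -(pcomp1f (_ x)).
- exact/pc_P/pc_id.
- exact/pc_Q/pc_id.
Qed.

Lemma in_polycyclic_word l : in_polycyclic (pc_word l).
Proof.
elim: l => [|b l IH]; first exact: pc_id.
exact: in_polycyclic_comp (in_polycyclic_gen b) IH.
Qed.

Lemma pc_word_rcons l b u :
  pc_word (rcons l b) u = obind (pc_gen b) (pc_word l u).
Proof.
rewrite -cats1 pc_word_cat; case: (pc_word l u) => //= v.
by rewrite /Defs.pcomp; case: (pc_gen b v).
Qed.

Lemma in_polycyclicP (f : pfun X) : in_polycyclic f -> exists l, f = pc_word l.
Proof.
elim=> [|x g _ [l ->]|x g _ [l ->]]; first by exists [::].
- exists (rcons l (true, x)).
  by apply: functional_extensionality => u; rewrite pc_word_rcons.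
- exists (rcons l (false, x)).
  by apply: functional_extensionality => u; rewrite pc_word_rcons.
Qed.

Lemma Qgen_rcons (x : X) v : Qgen x (rcons v x) = Some v.
Proof. by rewrite /Qgen size_rcons last_rcons eqxx /= -cats1 take_size_cat. Qed.

Lemma QgenP (x : X) u v : Qgen x u = Some v -> u = rcons v x.
Proof.
rewrite /Qgen; case/lastP: u => [|u y] //=.
rewrite size_rcons last_rcons /=; case: (y =P x) => // -> [<-].
by rewrite -cats1 take_size_cat // cats1.
Qed.

Lemma in_polycyclic_catl (f : pfun X) : in_polycyclic f ->
  forall u v v', f v = Some v' -> f (u ++ v) = Some (u ++ v').
Proof.
elim=> [|x g _ IH|x g _ IH] u v v'; rewrite /Defs.pcomp.
- by rewrite /pid => -[->].
- by case E: (g v) => [w|] //= [<-]; rewrite (IH _ _ _ E) /= /Pgen rcons_cat.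
- case E: (g v) => [w|] //= /QgenP Ew.
  by rewrite Ew in E; rewrite (IH _ _ _ E) /= -rcons_cat Qgen_rcons.
Qed.

Lemma polycyclic_fix_nil (f : polycyclic_monoid X) :
  sval f [::] = Some [::] -> f = mone (polycyclic_monoid X).
Proof.
move=> f_nil; apply: polycyc_eq; apply: functional_extensionality => u /=.
by have := in_polycyclic_catl (proj2_sig f) u f_nil; rewrite !cats0.
Qed.

Lemma pc_word_push (e : seq X) u : pc_word (map (pair true) e) u = Some (u ++ e).
Proof.
by elim: e u => [|x e IH] u; rewrite ?cats0 // map_cons pc_word_cons /= IH cat_rcons.
Qed.

Lemma pc_word_pop (e : seq X) u : pc_word (map (pair false) (rev e)) (u ++ e) = Some u.
Proof.
elim/last_ind: e u => [|e x IH] u; first by rewrite cats0.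
by rewrite rev_rcons /= /Defs.pcomp /pc_gen /= -rcons_cat Qgen_rcons /= IH.
Qed.

Lemma pc_word_popP (e : seq X) u v :
  pc_word (map (pair false) (rev e)) u = Some v -> u = v ++ e.
Proof.
elim/last_ind: e u v => [|e x IH] u v; first by move=> [->]; rewrite cats0.
rewrite rev_rcons /= /Defs.pcomp /pc_gen /=.
by case E: (Qgen x u) => [w|] //= /IH Ew; rewrite (QgenP E) Ew rcons_cat.
Qed.

Lemma polycyclic_mulE (f g : polycyclic_monoid X) u :
  sval (mmul f g) u = obind (sval g) (sval f u).
Proof. by []. Qed.

Definition pc_elt (l : seq (bool * X)) : polycyclic_monoid X :=
  exist _ (pc_word l) (in_polycyclic_word l).

End PolycyclicWords.

Lemma pda_run_step (S : finType) (M : monoid) (A : vpda S M)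
    (q q1 q2 : pda_state A) a g g1 st w m st2 st0 w0 m0 :
  (q1, g1) \in pda_delta q a g -> pda_run q1 (oseq g1 ++ st) w m q2 st2 ->
  st0 = oseq g ++ st -> w0 = oseq a ++ w -> m0 = mmul (pda_val q a g q1 g1) m ->
  pda_run q st0 w0 m0 q2 st2.
Proof. by move=> ? ? -> -> ->; apply: prun_step. Qed.

Lemma nfa_run_step (S : finType) (N : monoid) (A : vnfa S N)
    (q q1 q2 : nfa_state A) a w m w0 m0 :
  q1 \in nfa_delta q a -> nfa_run q1 w m q2 ->
  w0 = oseq a ++ w -> m0 = mmul (nfa_val q a q1) m ->
  nfa_run q w0 m0 q2.
Proof. by move=> ? ? -> ->; apply: nrun_step. Qed.

Section PdaToNfa.
Variables (S : finType) (M : monoid) (A : vpda S M).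
Local Notation G := (pda_stack A).
Local Notation PM := (prod_monoid P2 M).

Definition stack_code (c : G) : seq bool :=
  mkseq (fun j => j == enum_rank c :> nat) #|G|.+1.

Definition stack_word (st : seq G) : seq bool := flatten (map stack_code (rev st)).

Definition push_code (g : option G) : seq (bool * bool) :=
  if g is Some c then map (pair true) (stack_code c) else [::].

Definition pop_code (g : option G) : seq (bool * bool) :=
  if g is Some c then map (pair false) (rev (stack_code c)) else [::].

Definition stack_op (g g1 : option G) : P2 := pc_elt (pop_code g ++ push_code g1).

Lemma size_stack_code c : size (stack_code c) = #|G|.+1.
Proof. exact: size_mkseq. Qed.

Lemma stack_code_inj : injective stack_code.
Proof.
move=> c d cd.
have rank_lt (e : G) : enum_rank e < #|G|.+1 by apply: leq_trans (ltn_ord _) _.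
have := congr1 (nth false ^~ (enum_rank c)) cd.
rewrite /= !nth_mkseq // eqxx => /esym /eqP /val_inj.
exact: enum_rank_inj.
Qed.

Lemma stack_word_cons c st : stack_word (c :: st) = stack_word st ++ stack_code c.
Proof. by rewrite /stack_word rev_cons -cats1 map_cat flatten_cat /= cats0. Qed.

Lemma stack_word_eq_nil st : stack_word st = [::] -> st = [::].
Proof.
case: st => // c st; rewrite stack_word_cons => /(congr1 size).
by rewrite size_cat size_stack_code addnS.
Qed.

Lemma stack_word_code_suffix st v c : stack_word st = v ++ stack_code c ->
  exists st0, st = c :: st0 /\ v = stack_word st0.
Proof.
case: st => [|d st].
  by move/(congr1 size); rewrite size_cat size_stack_code addnS.
rewrite stack_word_cons => stv.
have size_st : size (stack_word st) = size v.
  by move/(congr1 size): stv; rewrite !size_cat !size_stack_code => /addIn.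
move/eqP: stv; rewrite eqseq_cat // => /andP [/eqP <- /eqP /stack_code_inj ->].
by exists st.
Qed.

Lemma stack_opE g g1 st :
  sval (stack_op g g1) (stack_word (oseq g ++ st)) = Some (stack_word (oseq g1 ++ st)).
Proof.
have pop_g : pc_word (pop_code g) (stack_word (oseq g ++ st)) = Some (stack_word st).
  by case: g => [c|] //=; rewrite stack_word_cons pc_word_pop.
rewrite /= pc_word_cat pop_g /=.
by case: g1 => [c|] //; rewrite /push_code pc_word_push -stack_word_cons.
Qed.

Lemma stack_opP g g1 st v : sval (stack_op g g1) (stack_word st) = Some v ->
  exists st0, st = oseq g ++ st0 /\ v = stack_word (oseq g1 ++ st0).
Proof.
rewrite /= pc_word_cat.
case pop_g: (pc_word (pop_code g) (stack_word st)) => [v0|] //=.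
have [st0 [-> ->]] : exists st0, st = oseq g ++ st0 /\ v0 = stack_word st0.
  case: g pop_g => [c /pc_word_popP|[<-]]; last by exists st.
  exact: stack_word_code_suffix.
case: g1 => [c|]; last by case=> <-; exists st0.
by rewrite /push_code pc_word_push => -[<-]; exists st0; rewrite stack_word_cons.
Qed.

(* NFA valences only see source, letter and target, so the target state also
   records the stack action of the simulated PDA transition. *)
Definition nfa_of_pda_state := (pda_state A * option G * option G)%type.

Definition nfa_of_pda : vnfa S PM :=
  @VNFA S PM nfa_of_pda_state
    (fun p a => [set p' | (p'.1.1, p'.2) \in pda_delta p.1.1 a p'.1.2])
    (pda_init A, None, None)
    [set p | p.1.1 \in pda_accept A]
    (fun p a p' => (stack_op p'.1.2 p'.2, pda_val p.1.1 a p'.1.2 p'.1.1 p'.2)).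

Lemma nfa_of_pda_run q st w m q2 st2 : pda_run q st w m q2 st2 ->
  forall g g1, exists g2 g3 (f : P2),
    nfa_run (A := nfa_of_pda) (q, g, g1) w (f, m) (q2, g2, g3) /\
    sval f (stack_word st) = Some (stack_word st2).
Proof.
elim=> {q st w m q2 st2} [q st|q a g q1 g1 st w m q2 st2 qq1 _ IH] g' g1'.
  by exists g', g1', (mone P2); split; [apply: nrun_nil|].
have [g2 [g3 [f [run_f f_st]]]] := IH g g1.
exists g2, g3, (mmul (stack_op g g1) f); split.
  by apply: nfa_run_step run_f _ _ => //; rewrite inE.
by rewrite polycyclic_mulE stack_opE.
Qed.

Lemma pda_run_of_nfa p w fm p2 : nfa_run (A := nfa_of_pda) p w fm p2 ->
  forall st v, sval fm.1 (stack_word st) = Some v ->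
  exists st2, v = stack_word st2 /\ pda_run p.1.1 st w fm.2 p2.1.1 st2.
Proof.
elim=> {p w fm p2} [p|p a p1 w m p2 pp1 _ IH] st v.
  by move=> [<-]; exists st; split; last apply: prun_nil.
rewrite polycyclic_mulE.
case op_st: (sval (stack_op p1.1.2 p1.2) (stack_word st)) => [v0|] //= m_v0.
have [st0 [st_st0 v0_st0]] := stack_opP op_st.
rewrite v0_st0 in m_v0.
have [st2 [-> run_st2]] := IH _ _ m_v0.
exists st2; split => //.
by apply: pda_run_step run_st2 st_st0 _ _ => //; move: pp1; rewrite inE.
Qed.

Lemma nfa_of_pdaP w : pda_accepts A w <-> nfa_accepts nfa_of_pda w.
Proof.
split=> [[qf qf_acc run_w] | [pf pf_acc run_w]].
- have [g2 [g3 [f [run_f f_nil]]]] := nfa_of_pda_run run_w None None.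
  rewrite (polycyclic_fix_nil f_nil) in run_f.
  by exists (qf, g2, g3); rewrite ?inE.
- have [st2 [st2_nil run_st2]] := pda_run_of_nfa run_w (st := [::]) erefl.
  exists pf.1.1; first by move: pf_acc; rewrite inE.
  by rewrite (stack_word_eq_nil (esym st2_nil)) in run_st2.
Qed.

End PdaToNfa.

Definition gen_stack_action (b : bool * bool) : option bool * option bool :=
  if b.1 then (None, Some b.2) else (Some b.2, None).

Lemma pc_gen_stack b st :
  pc_gen b (rev (oseq (gen_stack_action b).1 ++ st)) =
  Some (rev (oseq (gen_stack_action b).2 ++ st)).
Proof. by case: b => [[] x]; rewrite /pc_gen /= rev_cons ?Qgen_rcons. Qed.

Lemma pc_gen_stackP b u v : pc_gen b u = Some v -> exists st,
  rev u = oseq (gen_stack_action b).1 ++ st /\ rev v = oseq (gen_stack_action b).2 ++ st.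
Proof.
case: b => [[] x] /=.
- by move=> [<-]; exists (rev u); rewrite rev_rcons.
- by move/QgenP ->; exists (rev v); rewrite rev_rcons.
Qed.

Section NfaToPda.
Variables (S : finType) (M : monoid) (B : vnfa S (prod_monoid P2 M)).
Local Notation Q := (nfa_state B).

Definition nfa_trans := (Q * option S * Q)%type.

Variable code : nfa_trans -> seq (bool * bool).
Hypothesis codeE :
  forall t : nfa_trans, pc_word (code t) = sval (nfa_val t.1.1 t.1.2 t.2).1.

Definition code_max := \max_(t : nfa_trans) size (code t).

(* [inr (t, i)]: simulating transition [t], whose first [i] generators are done.
   The binary stack holds the reversal of the word P_2 acts on. *)
Definition pda_of_nfa_state := (Q + nfa_trans * 'I_code_max.+1)%type.

Definition pda_of_nfa_move (p : pda_of_nfa_state) (a : option S) (g : option bool)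
    (p' : pda_of_nfa_state) (g1 : option bool) : bool :=
  match p, p' with
  | inl q, inr (t, i) =>
      [&& g == None, g1 == None, t == (q, a, t.2), t.2 \in nfa_delta q a & i == 0 :> nat]
  | inr (t, i), inr (t', j) =>
      [&& a == None, i < size (code t), t' == t, j == i.+1 :> nat &
          (g, g1) == gen_stack_action (nth (true, true) (code t) i)]
  | inr (t, i), inl q' =>
      [&& a == None, size (code t) <= i, q' == t.2, g == None & g1 == None]
  | inl _, inl _ => false
  end.

Definition pda_of_nfa : vpda S M :=
  @VPDA S M pda_of_nfa_state bool
    (fun p a g => [set x | pda_of_nfa_move p a g x.1 x.2])
    (inl (nfa_init B))
    [set p | if p is inl q then q \in nfa_accept B else false]
    (fun p a _ p' _ =>
       if (p, p') is (inl q, inr (t, _)) then (nfa_val q a t.2).2 else mone M).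

Lemma size_code_max t : size (code t) <= code_max.
Proof. exact: (leq_bigmax t). Qed.

Lemma pda_of_nfa_run_code k t i (lt_i : i < code_max.+1) : size (code t) = i + k ->
  forall u v, pc_word (drop i (code t)) u = Some v ->
  forall w m p2 st2, pda_run (A := pda_of_nfa) (inl t.2) (rev v) w m p2 st2 ->
  pda_run (A := pda_of_nfa) (inr (t, Ordinal lt_i)) (rev u) w m p2 st2.
Proof.
elim: k i lt_i => [|k IH] i lt_i size_t u v.
  rewrite addn0 in size_t; rewrite drop_oversize ?size_t // => -[<-] w m p2 st2 run_v.
  apply: (pda_run_step (a := None) (g := None) (g1 := None)) run_v _ _ _ => //=.
    by rewrite inE /= size_t leqnn !eqxx.
  by rewrite mul1m.
have lt_i_t : i < size (code t) by rewrite size_t addnS ltnS leq_addr.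
have lt_Si : i.+1 < code_max.+1 by apply: leq_trans lt_i_t (size_code_max t).
rewrite (drop_nth (true, true) lt_i_t) pc_word_cons.
set b := nth _ _ _; case gen_u: (pc_gen b u) => [u1|] //= u1_v w m p2 st2 run_v.
have [st [u_st u1_st]] := pc_gen_stackP gen_u.
have size_t' : size (code t) = i.+1 + k by rewrite size_t addSnnS.
have := IH i.+1 lt_Si size_t' _ _ u1_v w m p2 st2 run_v; rewrite u1_st => run_u1.
apply: (pda_run_step (a := None)) run_u1 u_st _ _ => //=; last by rewrite mul1m.
by rewrite inE /= lt_i_t -surjective_pairing !eqxx.
Qed.

Lemma pda_of_nfa_run (q q2 : Q) w fm : nfa_run q w fm q2 ->
  forall u u', sval fm.1 u = Some u' ->
  pda_run (A := pda_of_nfa) (inl q) (rev u) w fm.2 (inl q2) (rev u').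
Proof.
elim=> {q w fm q2} [q|q a q1 w m q2 qq1 _ IH] u u'.
  by move=> [<-]; apply: prun_nil.
rewrite polycyclic_mulE.
case val_u: (sval (nfa_val q a q1).1 u) => [v|] //= m_v.
have code_u : pc_word (drop 0 (code (q, a, q1))) u = Some v by rewrite drop0 codeE.
have run_code := pda_of_nfa_run_code (ltn0Sn _) erefl code_u (IH _ _ m_v).
apply: (pda_run_step (g := None) (g1 := None)) run_code _ _ _ => //.
by rewrite inE /= qq1 !eqxx.
Qed.

Definition resume (p : pda_of_nfa_state) : Q * seq (bool * bool) :=
  match p with inl q => (q, [::]) | inr (t, i) => (t.2, drop i (code t)) end.

Lemma nfa_run_of_pda p st w m p2 st2 : pda_run (A := pda_of_nfa) p st w m p2 st2 ->
  forall q2, p2 = inl q2 -> exists f : P2,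
    nfa_run (resume p).1 w (f, m) q2 /\
    obind (sval f) (pc_word (resume p).2 (rev st)) = Some (rev st2).
Proof.
elim=> {p st w m p2 st2} [p st|p a g p1 g1 st w m p2 st2 move_p _ IH] q2 p2_q2.
  by subst p; exists (mone P2); split; [apply: nrun_nil|].
have [f [run_f f_st]] := IH q2 p2_q2.
move: move_p; rewrite inE /=.
case: p => [q|[t i]]; case: p1 {IH} run_f f_st => [q1|[[[q0 a0] q1] i1]] //= run_f f_st.
- case/and5P => /eqP -> /eqP g1E /eqP [q0E a0E] q_q1 /eqP i1_0; subst g1 q0 a0.
  exists (mmul (nfa_val q a q1).1 f); split; first exact: nfa_run_step q_q1 run_f _ _.
  by rewrite polycyclic_mulE -(codeE (q, a, q1)) -f_st i1_0 drop0.
- case/and5P => /eqP -> le_i /eqP q1E /eqP -> /eqP g1E; subst q1 g1.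
  by exists f; rewrite mul1m drop_oversize.
- case/and5P => /eqP -> lt_i /eqP tE /eqP i1E /eqP gE; subst t.
  exists f; split; first by rewrite mul1m.
  set b := nth _ _ _ in gE.
  move: f_st; have [-> ->] : g = (gen_stack_action b).1 /\ g1 = (gen_stack_action b).2.
    by rewrite -gE.
  by rewrite (drop_nth (true, true) lt_i) pc_word_cons pc_gen_stack -i1E.
Qed.

Lemma pda_of_nfaP w : nfa_accepts B w <-> pda_accepts pda_of_nfa w.
Proof.
split=> [[qf qf_acc run_w] | [[qf|pf] pf_acc run_w]]; last by move: pf_acc; rewrite inE.
- exists (inl qf); first by rewrite inE.
  exact: pda_of_nfa_run run_w [::] [::] erefl.
- have [f [run_f f_nil]] := nfa_run_of_pda run_w erefl.
  exists qf; first by move: pf_acc; rewrite inE.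
  by rewrite (polycyclic_fix_nil f_nil) in run_f.
Qed.

End NfaToPda.

Lemma polycyclic_word_choice (X : eqType) (I : Type) (F : I -> polycyclic_monoid X) :
  exists code : I -> seq (bool * X), forall i, pc_word (code i) = sval (F i).
Proof.
have code_i i : exists l, pc_word l = sval (F i).
  by have [l ->] := in_polycyclicP (proj2_sig (F i)); exists l.
by exists (fun i => proj1_sig (constructive_indefinite_description _ (code_i i))) => i;
  case: constructive_indefinite_description.
Qed.

Theorem theorem1 (M : monoid) (S : finType) (L : seq S -> Prop) :
  @L_Val_PDA M S L <-> @L_Val_NFA (prod_monoid P2 M) S L.
Proof.
split=> [[A LA] | [B LB]].
- by exists (nfa_of_pda A) => w; rewrite LA nfa_of_pdaP.
- have [code codeE] :=
    polycyclic_word_choice (fun t : nfa_trans B => (nfa_val t.1.1 t.1.2 t.2).1).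
  by exists (pda_of_nfa code) => w; rewrite LB (pda_of_nfaP codeE).
Qed.
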